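(* Let $A=\{h\in\mathfrak{S}Sym:(\mathrm{id}\otimes\mathcal{D})\Delta(h)=h\otimes1\}$ be the left Hopf kernel of $\mathcal{D}\colon\mathfrak{S}Sym\to QSym$, and $A_n$ its homogeneous component of degree $n\ge1$. Then a basis of $A_n$ is $\{\mathcal{M}_u\}$ where $u$ runs over those $u\in\mathfrak{S}_n$ for which there is no $k\in\{0,1,\ldots,n-1\}$ with $u_{k+i}=i$ for all $1\le i\le n-k$. In particular $\dim A_n=n!-\sum_{k=0}^{n-1}k!$.
   Context: $\mathfrak{S}Sym$ is the Malvenuto–Reutenauer Hopf algebra over $\mathbb{Q}$ with basis $\{\mathcal{F}_u:u\in\mathfrak{S}_n,n\ge0\}$, graded by $n$; product $\mathcal{F}_u\cdot\mathcal{F}_v=\sum_\zeta\mathcal{F}_{(u\times v)\zeta^{-1}}$ over $\zeta\in\mathfrak{S}_{p+q}$ increasing on $[1,p]$ and on $[p+1,p+q]$ (where $(u\times v)(i)=u_i$, $i\le p$, $(u\times v)(p+j)=p+v_j$, and permutation product is composition); coproduct $\Delta(\mathcal{F}_u)=\sum_{p=0}^n\mathcal{F}_{\mathrm{st}(u_1..u_p)}\otimes\mathcal{F}_{\mathrm{st}(u_{p+1}..u_n)}$ with $\mathrm{st}$ the permutation with the same relative order. Weak order $u\le v$ iff $\mathrm{Inv}(u)\subseteq\mathrm{Inv}(v)$, Möbius function $\mu$, $\mathcal{M}_u=\sum_{v\ge u}\mu(u,v)\mathcal{F}_v$. $QSym$ is the Hopf algebra of quasi-symmetric functions with fundamental basis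 $F_J$ ($J\subseteq[n-1]$), and $\mathcal{D}(\mathcal{F}_u)=F_{\mathrm{Des}(u)}$, $\mathrm{Des}(u)=\{p:u_p>u_{p+1}\}$, is a Hopf algebra morphism. *)

(* The degree-n component SSym_n of the Malvenuto--Reutenauer
   algebra over Q is represented by coordinate vectors in the fundamental basis:
   h = \sum_u h u F_u, with h : {ffun 'S_n -> rat}. *)
From mathcomp Require Import all_boot all_order all_algebra all_fingroup.
Set Implicit Arguments. Unset Strict Implicit. Unset Printing Implicit Defensive.
Import GRing.Theory.

(* one-line notation u_1 ... u_n, with 0-based letters: u_(i+1) = (u i) + 1 *)
Definition word n (u : 'S_n) : seq nat := [seq val (u i) | i <- enum 'I_n].

Definition st_rel (s : seq nat) m (v : 'S_m) : bool :=
  [forall i : 'I_m, forall j : 'I_m, (v i < v j)%N == (nth 0 s i < nth 0 s j)%N].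

(* standardization st(s) in S_m (unique when s has m distinct letters) *)
Definition st (s : seq nat) m : 'S_m := odflt (1%g : 'S_m) [pick v : 'S_m | st_rel s v].

(* descent set Des(w) ⊆ [m-1], 1-based positions, as an increasing list *)
Definition Des m (w : 'S_m) : seq nat :=
  [seq p <- iota 1 m.-1 | (nth 0 (word w) p.-1 > nth 0 (word w) p)%N].

(* Coefficient of F_v ⊗ F_J (v in S_p, F_J in QSym_(n-p)) in (id ⊗ D) Δ(h),
   for h in SSym_n. *)
Definition idDDelta n (h : {ffun 'S_n -> rat}) p (v : 'S_p) (J : seq nat) : rat :=
  \sum_(u : 'S_n) h u *
     ((st (take p (word u)) p == v) && (Des (st (drop p (word u)) (n - p)) == J))%:R.

(* h ∈ A_n  :<=>  (id ⊗ D) Δ(h) = h ⊗ 1   (1 = F_∅ in QSym_0);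
   compared coefficientwise on the basis F_v ⊗ F_J of ⊕_p SSym_p ⊗ QSym_(n-p). *)
Definition in_left_kernel n (h : {ffun 'S_n -> rat}) : Prop :=
  (forall p (v : 'S_p) (J : seq nat), (p < n)%N -> idDDelta h v J = 0%R) /\
  (forall (v : 'S_n) (J : seq nat), idDDelta h v J = ((J == [::])%:R * h v)%R).

Definition inv_pair n (u : 'S_n) (i j : 'I_n) : bool := (i < j)%N && (u j < u i)%N.
Definition weak_le n (u v : 'S_n) : bool :=
  [forall i : 'I_n, forall j : 'I_n, inv_pair u i j ==> inv_pair v i j].
Definition weak_lt n (u v : 'S_n) : bool := weak_le u v && (u != v).

(* The fuel #|S_n| exceeds the length of every chain, so it is never exhausted. *)
Fixpoint mu_fuel n (k : nat) (u v : 'S_n) : rat :=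
  match k with
  | 0 => (u == v)%:R
  | k.+1 => if u == v then 1%R
            else if weak_le u v then
              (- \sum_(w : 'S_n | weak_le u w && weak_lt w v) mu_fuel k u w)%R
            else 0%R
  end.
Definition mobius n (u v : 'S_n) : rat := mu_fuel #|{perm 'I_n}| u v.

Definition Mbasis n (u : 'S_n) : {ffun 'S_n -> rat} :=
  [ffun v => if weak_le u v then mobius u v else 0%R].

(* u is "good" iff there is no k in {0,...,n-1} with u_(k+i) = i for 1 <= i <= n-k
   (0-based: u (k+j) = j for 0 <= j < n-k) *)
Definition good n (u : 'S_n) : bool :=
  ~~ [exists k : 'I_n, [forall j : 'I_n, ((k + j < n)%N ==> (nth 0 (word u) (k + j) == j))]].

(* Let zeta h W be the sum of h x over x <= W in the weak order.  Moebius
   inversion gives zeta M_u = [u = W], and zeta is unitriangular, hence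
   injective; so the theorem follows once h in A_n is shown to be equivalent to
   zeta h vanishing at every permutation W that is not good, i.e. ends with the
   word 1 2 ... n-k after some position k < n.  For such W, x <= W holds iff
   st(x_1..x_k) <= st(W_1..W_k) and x increases after position k, so zeta h W
   is a sum of coefficients of F_v (x) 1 in (id (x) D) Delta h.  Conversely,
   induction on the weak order recovers each such coefficient from these sums,
   and inclusion-exclusion over descent sets recovers the coefficients of all
   F_v (x) F_J.  The non-good permutations ending after position k are in
   bijection with S_k, and k is unique, whence the count n! - sum_(k<n) k!. *)
From Pilot Require Import Defs.
From mathcomp Require Import all_boot all_order all_algebra all_fingroup.
Import GRing.Theory.
Set Implicit Arguments. Unset Strict Implicit. Unset Printing Implicit Defensive.

Definition letter m (x : 'S_m) (i : nat) : nat := nth 0 (word x) i.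

Lemma size_word m (x : 'S_m) : size (word x) = m.
Proof. by rewrite /word size_map size_enum_ord. Qed.

Lemma letter_ord m (x : 'S_m) (i : 'I_m) : letter x i = x i.
Proof. by rewrite /letter /word (nth_map i) ?size_enum_ord // nth_ord_enum. Qed.

Lemma letter_lt m (x : 'S_m) i : i < m -> letter x i < m.
Proof. by move=> lt; rewrite -[i]/(val (Ordinal lt)) letter_ord. Qed.

Lemma letter_inj m (x : 'S_m) i j : i < m -> j < m -> letter x i = letter x j -> i = j.
Proof.
move=> li lj; rewrite -[i]/(val (Ordinal li)) -[j]/(val (Ordinal lj)) !letter_ord.
by move/val_inj/perm_inj => [].
Qed.

Lemma uniq_word m (x : 'S_m) : uniq (word x).
Proof. by rewrite /word map_inj_uniq ?enum_uniq // => i j /val_inj/perm_inj. Qed.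

Lemma ltn_letterSN m (x : 'S_m) t : t.+1 < m ->
  (letter x t < letter x t.+1) = ~~ (letter x t.+1 < letter x t).
Proof.
move=> tm; rewrite -leqNgt ltn_neqAle.
by case: eqP => // /(letter_inj (ltnW tm) tm) /n_Sn.
Qed.

Lemma card_ord_ltn m c : c <= m -> #|[set k : 'I_m | k < c]| = c.
Proof.
move=> cm; have -> : [set k : 'I_m | k < c] = [set widen_ord cm k | k : 'I_c].
  apply/setP => k; rewrite inE; apply/idP/imsetP.
    by move=> kc; exists (Ordinal kc) => //; apply: val_inj.
  by case=> k' _ ->; rewrite /= ltn_ord.
by rewrite card_imset ?card_ord // => a b /(congr1 val) /= /val_inj.
Qed.

Lemma card_perm_ltn m (u : 'S_m) (i : 'I_m) : #|[set j | u j < u i]| = u i.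
Proof.
rewrite -(card_imset _ (@perm_inj _ u)).
have -> : u @: [set j | u j < u i] = [set k : 'I_m | k < u i].
  apply/setP => k; rewrite inE; apply/imsetP/idP.
    by case=> j; rewrite inE => lt ->.
  by move=> lt; exists (u^-1 k)%g; rewrite ?inE permKV.
by rewrite card_ord_ltn // ltnW.
Qed.

(* u i is the number of letters of u below u i, so the relative order determines u. *)
Lemma eq_perm_ltn m (u v : 'S_m) : (forall i j, (u i < u j) = (v i < v j)) -> u = v.
Proof.
move=> H; apply/permP => i; apply: val_inj => /=.
rewrite -(card_perm_ltn u) -(card_perm_ltn v).
by apply: eq_card => j; rewrite !inE H.
Qed.

Section Standardization.
Variables (s : seq nat) (m : nat).
Hypotheses (uniq_s : uniq s) (size_s : size s = m).

Lemma st_rel_exists : exists v : 'S_m, st_rel s v.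
Proof.
pose c (i : 'I_m) := #|[set j : 'I_m | nth 0 s j < nth 0 s i]|.
have c_lt i : c i < m.
  rewrite -[m]card_ord -cardsT; apply: proper_card; rewrite properT.
  by apply/negP => /eqP E; move: (in_setT i); rewrite -E inE ltnn.
have c_mono (i j : 'I_m) : nth 0 s i < nth 0 s j -> c i < c j.
  move=> lt; apply: proper_card; apply/properP; split.
    by apply/subsetP => k; rewrite !inE => /ltn_trans; apply.
  by exists i; rewrite !inE ?lt ?ltnn.
have nth_inj (i j : 'I_m) : nth 0 s i = nth 0 s j -> i = j.
  by move=> E; apply: val_inj; apply/eqP; rewrite -(nth_uniq 0 _ _ uniq_s) ?size_s ?ltn_ord // E.
have c_ltn (i j : 'I_m) : (c i < c j) = (nth 0 s i < nth 0 s j).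
  case: (ltngtP (nth 0 s i) (nth 0 s j)) => [/c_mono //|/c_mono lt|E].
    by apply/negbTE; rewrite -leqNgt ltnW.
  by rewrite (nth_inj _ _ E) ltnn.
have c_inj : injective (fun i => Ordinal (c_lt i)).
  move=> i j /(congr1 val) /= E; apply: nth_inj.
  by case: (ltngtP (nth 0 s i) (nth 0 s j)) => // /c_mono; rewrite E ltnn.
exists (perm c_inj); apply/forallP => i; apply/forallP => j.
by rewrite !permE /= c_ltn.
Qed.

Lemma st_rel_uniq (v w : 'S_m) : st_rel s v -> st_rel s w -> v = w.
Proof.
move=> /forallP Hv /forallP Hw; apply: eq_perm_ltn => i j.
by move/forallP: (Hv i) => /(_ j) /eqP ->; move/forallP: (Hw i) => /(_ j) /eqP ->.
Qed.

Lemma st_rel_st : st_rel s (st s m).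
Proof.
rewrite /st; case: pickP => [v //|H].
by case: st_rel_exists => v; rewrite H.
Qed.

Lemma st_eq (v : 'S_m) : st_rel s v -> st s m = v.
Proof. exact: st_rel_uniq st_rel_st. Qed.

Lemma ltn_st (i j : 'I_m) : (st s m i < st s m j) = (nth 0 s i < nth 0 s j).
Proof. by move/forallP: st_rel_st => /(_ i) /forallP /(_ j) /eqP. Qed.

Lemma letter_st : all (fun a => a < m) s -> forall i, i < m -> letter (st s m) i = nth 0 s i.
Proof.
move=> s_lt.
have lt (i : 'I_m) : nth 0 s i < m by apply: (allP s_lt); rewrite mem_nth ?size_s.
have f_inj : injective (fun i => Ordinal (lt i)).
  move=> i j /(congr1 val) /= E; apply: val_inj; apply/eqP.
  by rewrite -(nth_uniq 0 _ _ uniq_s) ?size_s ?ltn_ord // E.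
have -> : st s m = perm f_inj.
  by apply: st_eq; apply/forallP => i; apply/forallP => j; rewrite !permE.
by move=> i im; rewrite -[i]/(val (Ordinal im)) letter_ord permE.
Qed.

End Standardization.

Lemma st_word m (u : 'S_m) : st (word u) m = u.
Proof.
apply: st_eq; rewrite ?uniq_word ?size_word //.
by apply/forallP => i; apply/forallP => j; rewrite -/(letter u i) -/(letter u j) !letter_ord.
Qed.

(** * The weak order and its zeta transform *)

Section WeakOrder.
Variable m : nat.
Implicit Types u v w : 'S_m.

Lemma weak_le_refl u : weak_le u u.
Proof. by apply/forallP => i; apply/forallP => j; rewrite implybb. Qed.

Lemma weak_le_trans u v w : weak_le u v -> weak_le v w -> weak_le u w.
Proof.
move=> /forallP H1 /forallP H2; apply/forallP => i; apply/forallP => j.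
by apply/implyP => /(implyP (forallP (H1 i) j)) /(implyP (forallP (H2 i) j)).
Qed.

Lemma weak_le_anti u v : weak_le u v -> weak_le v u -> u = v.
Proof.
move=> /forallP H1 /forallP H2; apply: eq_perm_ltn => i j.
have inv_eq (a b : 'I_m) : a < b -> (u b < u a) = (v b < v a).
  move=> ab; move: (forallP (H1 a) b) (forallP (H2 a) b); rewrite /Defs.inv_pair ab /=.
  by case: (u b < u a); case: (v b < v a).
have ltnN (w : 'S_m) (a b : 'I_m) : a < b -> (w a < w b) = ~~ (w b < w a).
  move=> ab; rewrite -leqNgt ltn_neqAle.
  by case: eqP => [/val_inj/perm_inj E|//]; rewrite E ltnn in ab.
case: (ltngtP (val i) (val j)) => [ij|/inv_eq //|/val_inj ->]; last by rewrite !ltnn.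
by rewrite !(ltnN _ _ _ ij) inv_eq.
Qed.

Definition weak_rank v := #|[set w | weak_lt w v]|.

Lemma weak_rank_lt w v : weak_lt w v -> weak_rank w < weak_rank v.
Proof.
move=> /andP [le ne]; apply: proper_card; apply/properP; split.
  apply/subsetP => x; rewrite !inE /weak_lt => /andP [lx nx].
  rewrite (weak_le_trans lx le); apply: contraNN nx => /eqP xv.
  by rewrite -xv in le *; rewrite (weak_le_anti lx le).
by exists w; rewrite !inE /weak_lt ?le ?ne ?eqxx ?andbF.
Qed.

Lemma weak_rank_max v : weak_rank v < #|{perm 'I_m}|.
Proof.
rewrite /weak_rank -cardsT; apply: proper_card; rewrite properT; apply/negP => /eqP E.
by move: (in_setT v); rewrite -E inE /weak_lt eqxx andbF.
Qed.

Lemma weak_lt_ind (P : 'S_m -> Prop) :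
  (forall v, (forall w, weak_lt w v -> P w) -> P v) -> forall v, P v.
Proof.
move=> IH v; elim: {v}(weak_rank v).+1 {-2}v (ltnSn (weak_rank v)) => // k IHk v hv.
by apply: IH => w /weak_rank_lt lt; apply: IHk; apply: leq_trans lt _; rewrite -ltnS.
Qed.

Lemma mu_fuel_enough k k' u v :
  weak_rank v < k -> weak_rank v < k' -> mu_fuel k u v = mu_fuel k' u v.
Proof.
elim: k k' v => [//|k IH] [//|k'] v hk hk' /=.
case: (u == v) => //; case: (weak_le u v) => //; congr (- _)%R.
apply: eq_bigr => w /andP [_ /weak_rank_lt lt].
by apply: IH; apply: leq_trans lt _; rewrite -ltnS.
Qed.

Lemma mobius_refl u : mobius u u = 1%R.
Proof. by rewrite /mobius; have := weak_rank_max u; case: #|_| => // k _ /=; rewrite eqxx. Qed.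

Lemma mobius_rec u v : u != v -> weak_le u v ->
  mobius u v = (- \sum_(w | weak_le u w && weak_lt w v) mobius u w)%R.
Proof.
move=> ne le; rewrite {1}/mobius; have := weak_rank_max v.
case: #|_| => [//|k] hk /=; rewrite (negbTE ne) le; congr (- _)%R.
apply: eq_bigr => w /andP [_ /weak_rank_lt lt]; apply: mu_fuel_enough.
  exact: leq_trans lt _.
exact: weak_rank_max.
Qed.

Lemma sum_mobius_interval u v : weak_le u v ->
  (\sum_(w | weak_le u w && weak_le w v) mobius u w = (u == v)%:R)%R.
Proof.
move=> le; case: (eqVneq u v) => [<-|ne].
  rewrite (bigD1 u) ?weak_le_refl //= mobius_refl big1 ?addr0 //.
  by move=> w /andP [/andP [a b] c]; move: c; rewrite (weak_le_anti b a) eqxx.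
rewrite (bigD1 v) ?le ?weak_le_refl //= (mobius_rec ne le).
rewrite [X in (_ + X)%R](eq_bigl (fun w => weak_le u w && weak_lt w v)) ?addNr //.
by move=> w; rewrite /weak_lt andbA.
Qed.

Definition weak_zeta (h : 'S_m -> rat) (W : 'S_m) : rat := (\sum_(x | weak_le x W) h x)%R.

Lemma weak_zeta_Mbasis u W : weak_zeta (Mbasis u) W = (u == W)%:R%R.
Proof.
rewrite /weak_zeta (eq_bigr (fun x => if weak_le u x then mobius u x else 0%R)).
  rewrite -big_mkcondr /=; case le: (weak_le u W).
    by rewrite -(sum_mobius_interval le); apply: eq_bigl => x; rewrite andbC.
  rewrite big1; last by move=> x /andP [a b]; move: le; rewrite (weak_le_trans b a).
  by case: eqP => // E; move: le; rewrite E weak_le_refl.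
by move=> x _; rewrite ffunE.
Qed.

Lemma weak_zeta_eq0 (h : 'S_m -> rat) : (forall W, weak_zeta h W = 0%R) -> forall v, h v = 0%R.
Proof.
move=> H; apply: weak_lt_ind => v IH.
by move: (H v); rewrite /weak_zeta (bigD1 v) ?weak_le_refl //= big1 ?addr0.
Qed.

Lemma weak_leP u v :
  reflect (forall i j, i < j -> j < m -> letter u j < letter u i -> letter v j < letter v i)
          (weak_le u v).
Proof.
apply: (iffP forallP) => [H i j ij jm|H i].
  have im : i < m by apply: ltn_trans ij jm.
  move: (forallP (H (Ordinal im)) (Ordinal jm)).
  rewrite /Defs.inv_pair /= ij /= -!(letter_ord u (Ordinal _)) -!(letter_ord v (Ordinal _)).
  by move/implyP.
apply/forallP => j; rewrite /Defs.inv_pair; apply/implyP => /andP [ij lt].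
rewrite ij /= -!letter_ord; rewrite -!letter_ord in lt.
exact: H ij (ltn_ord j) lt.
Qed.

End WeakOrder.

Lemma mem_iota_pred d k : (d \in iota 1 k.-1) = (0 < d < k).
Proof. by rewrite mem_iota add1n; case: k => [|k] //=; rewrite ltnS leqn0 ltn0 andbF; case: d. Qed.

Section PrefixSuffix.
Variables (n : nat) (x : 'S_n).

Definition st_take p := st (take p (word x)) p.
Definition st_drop p := st (drop p (word x)) (n - p).

Lemma ltn_st_take p (i j : 'I_p) : p <= n ->
  (st_take p i < st_take p j) = (letter x i < letter x j).
Proof.
move=> pn; rewrite /st_take ltn_st ?take_uniq ?uniq_word // ?size_take ?size_word.
  by rewrite !nth_take.
by case: ltnP => // le; apply: anti_leq; rewrite le pn.
Qed.

Lemma letter_st_take p i j : p <= n -> i < p -> j < p ->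
  (letter (st_take p) i < letter (st_take p) j) = (letter x i < letter x j).
Proof.
move=> pn ip jp; rewrite -[i]/(val (Ordinal ip)) -[j]/(val (Ordinal jp)) !letter_ord.
exact: ltn_st_take.
Qed.

Lemma st_take_eq p (v : 'S_p) : p <= n ->
  (forall i j, i < p -> j < p -> (letter v i < letter v j) = (letter x i < letter x j)) ->
  st_take p = v.
Proof. by move=> pn H; apply: eq_perm_ltn => i j; rewrite ltn_st_take // -!letter_ord H. Qed.

Lemma st_take_eqE p (v : 'S_p) : p <= n ->
  (st_take p == v) =
  [forall i : 'I_p, forall j : 'I_p, (letter v i < letter v j) == (letter x i < letter x j)].
Proof.
move=> pn; apply/eqP/forallP => [<- i|H].
  by apply/forallP => j; rewrite !letter_st_take.
apply: st_take_eq => // i j ip jp.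
by move/forallP: (H (Ordinal ip)) => /(_ (Ordinal jp)) /eqP.
Qed.

Lemma letter_st_drop p i j : i < n - p -> j < n - p ->
  (letter (st_drop p) i < letter (st_drop p) j) = (letter x (p + i) < letter x (p + j)).
Proof.
move=> ip jp; rewrite -[i]/(val (Ordinal ip)) -[j]/(val (Ordinal jp)) !letter_ord.
by rewrite /st_drop ltn_st ?drop_uniq ?uniq_word ?size_drop ?size_word ?nth_drop.
Qed.

Lemma Des_st_drop p : Des (st_drop p) =
  [seq d <- iota 1 (n - p).-1 | letter x (p + d) < letter x (p + d.-1)].
Proof.
apply: eq_in_filter => d; rewrite mem_iota_pred => /andP [d1 dn].
by rewrite -/(letter _ d) -/(letter _ d.-1) letter_st_drop // (leq_ltn_trans (leq_pred d)).
Qed.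

Definition increasing_from q :=
  [forall t : 'I_n, (q <= t) && (t.+1 < n) ==> (letter x t < letter x t.+1)].

Lemma increasing_from_ltn q i j :
  increasing_from q -> q <= i -> i < j -> j < n -> letter x i < letter x j.
Proof.
move=> /forallP inc qi; elim: j => // j IH; rewrite ltnS leq_eqVlt => /orP [/eqP <-|lt] jn.
  by move/implyP: (inc (Ordinal (ltn_trans (ltnSn i) jn))); apply; rewrite /= qi jn.
apply: ltn_trans (IH lt (ltnW jn)) _.
by move/implyP: (inc (Ordinal (ltnW jn))); apply; rewrite /= jn andbT (leq_trans qi (ltnW lt)).
Qed.

Lemma Des_st_drop_nil p : p < n -> (Des (st_drop p) == [::]) = increasing_from p.
Proof.
move=> pn; rewrite Des_st_drop -[_ == [::]]negbK -has_filter.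
apply/hasPn/forallP => [H [t tn] /=|H d].
  apply/implyP => /andP [pt t1].
  have : t.+1 - p \in iota 1 (n - p).-1.
    by rewrite mem_iota_pred subn_gt0 ltnS pt ltn_sub2r.
  move/H; rewrite subSn // /= addnS subnKC // => nlt.
  by rewrite ltn_letterSN ?nlt.
rewrite mem_iota_pred => /andP [d1 dn].
have tn : p + d.-1 < n by rewrite -ltn_subRL (leq_ltn_trans (leq_pred d)).
move/implyP: (H (Ordinal tn)); rewrite /= leq_addr -addnS prednK // -ltn_subRL.
by move=> /(_ dn) lt; rewrite -leqNgt ltnW.
Qed.

End PrefixSuffix.

(** * Permutations ending with 1 2 ... n-k *)

Definition iota_tail n (x : 'S_n) k :=
  [forall j : 'I_n, (k + j < n) ==> (letter x (k + j) == j)].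

Lemma iota_tailP n (x : 'S_n) k :
  reflect (forall j, k + j < n -> letter x (k + j) = j) (iota_tail x k).
Proof.
apply: (iffP forallP) => [tail j kj|tail j]; last by apply/implyP => /tail ->.
have jn : j < n by apply: leq_ltn_trans kj; apply: leq_addl.
by move/implyP: (tail (Ordinal jn)) => /(_ kj) /eqP.
Qed.

Lemma goodPn n (W : 'S_n) : reflect (exists2 k, k < n & iota_tail W k) (~~ good W).
Proof.
rewrite negbK; apply: (iffP existsP) => [[k tail]|[k kn tail]]; first by exists k.
by exists (Ordinal kn).
Qed.

Section IotaTail.
Variables (n k : nat) (kn : k <= n).

Lemma letter_iota_tail (x : 'S_n) i : iota_tail x k -> k <= i -> i < n -> letter x i = i - k.
Proof. by move=> /iota_tailP tail ki iN; rewrite -{1}(subnKC ki) tail // subnKC. Qed.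

Lemma letter_iota_tail_head (x : 'S_n) i : iota_tail x k -> i < k -> n - k <= letter x i.
Proof.
move=> /iota_tailP tail ik; rewrite leqNgt; apply/negP => lt.
have kj : k + letter x i < n by rewrite -ltn_subRL.
move: (tail _ kj) => /(letter_inj kj (leq_trans ik kn)) E.
by move: ik; rewrite -E ltnNge leq_addr.
Qed.

Lemma weak_le_iota_tail (u W : 'S_n) : iota_tail W k ->
  weak_le u W = weak_le (st_take u k) (st_take W k) && increasing_from u k.
Proof.
move=> tail; apply/weak_leP/andP => [H|[/weak_leP H1 H2] i j ij jn].
  split.
    apply/weak_leP => i j ij jk; rewrite !letter_st_take // ?(ltn_trans ij) //.
    exact: H ij (leq_trans jk kn).
  apply/forallP => -[t tlt] /=; apply/implyP => /andP [kt tn].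
  rewrite ltn_letterSN //.
  apply/negP => /(H _ _ (ltnSn t) tn).
  by rewrite !(letter_iota_tail tail) ?(ltnW tn) ?(leq_trans kt) // ltnNge leq_sub2r.
case: (ltnP j k) => jk.
  by move=> lt; move: (H1 _ _ ij jk); rewrite !letter_st_take // ?(ltn_trans ij) //; apply.
case: (ltnP i k) => ik lt.
  rewrite (letter_iota_tail tail jk jn); apply: leq_trans (letter_iota_tail_head tail ik).
  by rewrite ltn_sub2r // (leq_ltn_trans jk).
by have := ltn_trans lt (increasing_from_ltn H2 ik ij jn); rewrite ltnn.
Qed.

Lemma eq_iota_tail (a b : 'S_n) : iota_tail a k -> iota_tail b k ->
  (forall i j, i < k -> j < k -> (letter a i < letter a j) = (letter b i < letter b j)) ->
  a = b.
Proof.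
move=> ta tb H; apply: eq_perm_ltn => i j; rewrite -!letter_ord.
have iN := ltn_ord i; have jN := ltn_ord j.
have head_big (c : 'S_n) i' j' : iota_tail c k -> i' < k -> k <= j' -> j' < n ->
    letter c j' < letter c i'.
  move=> tc ik kj jn; rewrite (letter_iota_tail tc kj jn).
  by apply: leq_trans (letter_iota_tail_head tc ik); rewrite ltn_sub2r // (leq_ltn_trans kj).
case: (ltnP i k) => ik; case: (ltnP j k) => jk.
- exact: H.
- rewrite ltnNge (ltnW (head_big a _ _ ta ik jk jN)).
  by rewrite ltnNge (ltnW (head_big b _ _ tb ik jk jN)).
- by rewrite (head_big a _ _ ta jk ik iN) (head_big b _ _ tb jk ik iN).
- by rewrite !(letter_iota_tail ta) // !(letter_iota_tail tb).
Qed.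

Definition iota_tail_word (y : 'S_k) := map (addn (n - k)) (word y) ++ iota 0 (n - k).
Definition iota_tail_perm (y : 'S_k) : 'S_n := st (iota_tail_word y) n.

Lemma iota_tail_word_spec (y : 'S_k) :
  [/\ uniq (iota_tail_word y), size (iota_tail_word y) = n
    & all (fun a => a < n) (iota_tail_word y)].
Proof.
split.
- rewrite cat_uniq map_inj_uniq ?uniq_word ?iota_uniq ?andbT //=; last exact: addnI.
  apply/hasPn => a; rewrite mem_iota add0n => lt; apply/mapP => [[b _ E]].
  by move: lt; rewrite E ltnNge leq_addr.
- by rewrite size_cat size_map size_word size_iota subnKC.
- rewrite all_cat; apply/andP; split; apply/allP => a.
    case/mapP => b /(nthP 0) [i]; rewrite size_word => ik <- ->.
    by rewrite -ltn_subRL subKn // letter_lt.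
  by rewrite mem_iota add0n => /leq_trans; apply; apply: leq_subr.
Qed.

Lemma letter_iota_tail_perm (y : 'S_k) i :
  i < n -> letter (iota_tail_perm y) i = nth 0 (iota_tail_word y) i.
Proof. by case: (iota_tail_word_spec y) => *; apply: letter_st. Qed.

Lemma iota_tail_permP (y : 'S_k) : iota_tail (iota_tail_perm y) k.
Proof.
apply/iota_tailP => j lt; rewrite letter_iota_tail_perm // nth_cat size_map size_word.
by rewrite ltnNge leq_addr /= addKn nth_iota // ltn_subRL.
Qed.

Lemma st_take_iota_tail_perm (y : 'S_k) : st_take (iota_tail_perm y) k = y.
Proof.
apply: st_take_eq => // i j ik jk.
have head i' : i' < k -> letter (iota_tail_perm y) i' = n - k + letter y i'.
  move=> ik'; rewrite letter_iota_tail_perm ?(leq_trans ik') //.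
  by rewrite nth_cat size_map size_word ik' (nth_map 0) ?size_word.
by rewrite !head // ltn_add2l.
Qed.

Lemma iota_tail_perm_inj : injective iota_tail_perm.
Proof. by move=> y1 y2 E; rewrite -(st_take_iota_tail_perm y1) E st_take_iota_tail_perm. Qed.

Lemma iota_tail_perm_onto (u : 'S_n) : iota_tail u k -> u = iota_tail_perm (st_take u k).
Proof.
move=> tail; apply: (eq_iota_tail tail (iota_tail_permP _)) => i j ik jk.
rewrite -(letter_st_take u kn ik jk) -(letter_st_take (iota_tail_perm _) kn ik jk).
by rewrite st_take_iota_tail_perm.
Qed.

End IotaTail.

Lemma iota_tail_uniq n (u : 'S_n) k k' :
  k < n -> k' < n -> iota_tail u k -> iota_tail u k' -> k = k'.
Proof.
wlog lt : k k' / k < k'.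
  move=> W kn k'n t t'; case: (ltngtP k k') => [l|l|//]; first exact: W.
  by apply/esym; apply: W.
move=> _ k'n /iota_tailP t /iota_tailP t'.
have := t (k' - k); rewrite subnKC ?(ltnW lt) // => /(_ k'n).
by have := t' 0; rewrite addn0 => /(_ k'n) -> /eqP; rewrite eq_sym subn_eq0 leqNgt lt.
Qed.

Section Count.
Variable n : nat.

Lemma card_iota_tail k : k <= n -> #|[set u : 'S_n | iota_tail u k]| = k`!.
Proof.
move=> kn; have -> : [set u : 'S_n | iota_tail u k] = @iota_tail_perm n k @: [set: 'S_k].
  apply/setP => u; rewrite inE; apply/idP/imsetP => [tail|[y _ ->]].
    by exists (st_take u k); rewrite ?inE // -(iota_tail_perm_onto kn).
  exact: iota_tail_permP.
by rewrite card_imset ?cardsT ?card_Sn //; apply: iota_tail_perm_inj.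
Qed.

Lemma card_not_good : #|[set u : 'S_n | ~~ good u]| = \sum_(k < n) k`!.
Proof.
under eq_bigr => k _ do rewrite -(card_iota_tail (ltnW (ltn_ord k))).
rewrite -sum1_card big_mkcond /=.
under [RHS]eq_bigr => k _ do rewrite -sum1_card big_mkcond /=.
rewrite exchange_big /=; apply: eq_bigr => u _; rewrite inE.
case: goodPn => [[k0 k0n t0]|nb]; last first.
  by rewrite big1 // => k _; rewrite inE; case: ifP => // t; case: nb; exists k.
rewrite (bigD1 (Ordinal k0n)) //= inE t0 big1 // => k ne; rewrite inE; case: ifP => // t.
by case/eqP: ne; apply: val_inj; apply: iota_tail_uniq t t0.
Qed.

Lemma card_good : #|[set u : 'S_n | good u]| = (n`! - \sum_(k < n) k`!)%N.
Proof.
rewrite -card_not_good -card_Sn -(cardsC [set u : 'S_n | good u]).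
by rewrite (_ : ~: _ = [set u | ~~ good u]) ?addnK //; apply/setP => u; rewrite !inE.
Qed.

End Count.

(** * The left Hopf kernel *)

Lemma big_cond_natr (T : finType) (P : pred T) (F : T -> rat) :
  (\sum_(x | P x) F x = \sum_x F x * (P x)%:R)%R.
Proof. by rewrite big_mkcond; apply: eq_bigr => x _; case: (P x); rewrite ?mulr1 ?mulr0. Qed.

Lemma sum_eq_andb_natr (T : finType) (P : pred T) (a : T) (b : bool) :
  (\sum_(t | P t) ((a == t) && b)%:R = (P a && b)%:R :> rat)%R.
Proof.
case Pa: (P a); last by rewrite big1 //= => t Pt; case: eqP => // E; rewrite -E Pa in Pt.
rewrite (bigD1 a) //= eqxx big1 ?addr0 // => t /andP [_ ne].
by rewrite eq_sym (negbTE ne).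
Qed.

Lemma exchange_sum_natr (T U : finType) (P : pred U) (h : T -> rat) (c : T -> U -> bool) :
  (\sum_(y | P y) \sum_x h x * (c x y)%:R = \sum_x h x * \sum_(y | P y) (c x y)%:R)%R.
Proof. by rewrite exchange_big /=; apply: eq_bigr => x _; rewrite mulr_sumr. Qed.

Lemma Des_small m (w : 'S_m) : m <= 1 -> Des w = [::].
Proof.
move=> m1; apply/eqP; rewrite -size_eq0 -leqn0 /Des size_filter.
by apply: leq_trans (count_size _ _) _; rewrite size_iota; case: m m1 {w} => [|[|]].
Qed.

Lemma idDDelta_top n (h : {ffun 'S_n -> rat}) (v : 'S_n) J :
  idDDelta h v J = ((J == [::])%:R * h v)%R.
Proof.
rewrite /idDDelta (bigD1 v) //= big1 ?addr0.
  by rewrite take_oversize ?size_word // st_word eqxx Des_small ?subnn //= eq_sym mulrC.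
by move=> u ne; rewrite take_oversize ?size_word // st_word (negbTE ne) mulr0.
Qed.

Section KernelToZeta.
Variables (n : nat) (h : {ffun 'S_n -> rat}).

Lemma idDDelta_nil q (y : 'S_q) : q < n ->
  idDDelta h y [::] = (\sum_x h x * ((st_take x q == y) && increasing_from x q)%:R)%R.
Proof.
by move=> qn; apply: eq_bigr => x _; rewrite -/(st_take x q) -/(st_drop x q) Des_st_drop_nil.
Qed.

Lemma weak_zeta_iota_tail (W : 'S_n) k : k < n -> iota_tail W k ->
  weak_zeta h W = (\sum_(v | weak_le v (st_take W k)) idDDelta h v [::])%R.
Proof.
move=> kn tail; under eq_bigr => v _ do rewrite (idDDelta_nil _ kn).
rewrite /weak_zeta big_cond_natr exchange_sum_natr; apply: eq_bigr => x _.
by rewrite (weak_le_iota_tail (ltnW kn) _ tail) sum_eq_andb_natr.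
Qed.

Lemma in_left_kernel_zeta :
  in_left_kernel h -> forall W, ~~ good W -> weak_zeta h W = 0%R.
Proof.
move=> [K _] W /goodPn [k kn tail].
by rewrite (weak_zeta_iota_tail kn tail) big1 // => v _; apply: K.
Qed.

End KernelToZeta.

Section ZetaToKernel.
Variables (n : nat) (h : {ffun 'S_n -> rat}).
Hypothesis zeta_not_good : forall W : 'S_n, ~~ good W -> weak_zeta h W = 0%R.

Lemma idDDelta_nil_eq0 q (y : 'S_q) : q < n -> idDDelta h y [::] = 0%R.
Proof.
move=> qn; elim/weak_lt_ind: y => y IH.
have tail := iota_tail_permP (ltnW qn) y.
have := zeta_not_good (introT (goodPn _) (ex_intro2 _ _ q qn tail)).
rewrite (weak_zeta_iota_tail h qn tail) (st_take_iota_tail_perm (ltnW qn)).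
rewrite (bigD1 y) ?weak_le_refl //=.
by rewrite big1 ?addr0 // => w /andP [le ne]; apply: IH; rewrite /weak_lt le.
Qed.

Variables (p : nat) (pn : p < n) (v : 'S_p).

(* descents_from x is Des (st_drop x p) shifted to the 0-based positions of x;
   Des_of_positions undoes the shift. *)
Definition descents_from (x : 'S_n) :=
  [set t : 'I_n | (p <= t) && (t.+1 < n) && (letter x t.+1 < letter x t)].
Definition Des_of_positions (D : {set 'I_n}) :=
  [seq d <- iota 1 (n - p).-1 | [exists t in D, val t == p + d.-1]].

Lemma Des_st_drop_positions x : Des (st_drop x p) = Des_of_positions (descents_from x).
Proof.
rewrite Des_st_drop; apply: eq_in_filter => d; rewrite mem_iota_pred => /andP [d1 dn].
have tn : p + d.-1 < n by rewrite -ltn_subRL (leq_ltn_trans (leq_pred d)).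
apply/idP/existsP => [lt|[t /andP [tin /eqP tv]]].
  exists (Ordinal tn); rewrite /= eqxx andbT inE /= leq_addr -addnS prednK //.
  by rewrite lt -ltn_subRL dn.
by move: tin; rewrite inE tv -addnS prednK // => /andP [_ ->].
Qed.

Definition descents_eq_sum (D : {set 'I_n}) :=
  (\sum_x h x * ((descents_from x == D) && (st_take x p == v))%:R)%R.
Definition descents_sub_sum (D : {set 'I_n}) :=
  (\sum_x h x * ((descents_from x \subset D) && (st_take x p == v))%:R)%R.

Lemma descents_sub_sumE D :
  descents_sub_sum D = (\sum_(D' : {set 'I_n} | D' \subset D) descents_eq_sum D')%R.
Proof. by rewrite exchange_sum_natr; apply: eq_bigr => x _; rewrite sum_eq_andb_natr. Qed.

Lemma descents_cut (D : {set 'I_n}) : exists q, [/\ p <= q, q < n,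
  forall t : 'I_n, t \in D -> p <= t -> t.+1 < n -> t.+1 <= q &
  p < q -> exists2 t : 'I_n, t \in D & t.+1 = q].
Proof.
pose A := [pred t : 'I_n | (t \in D) && (p <= t) && (t.+1 < n)].
pose M := \max_(t in A) t.+1.
have Mn : M < n.
  rewrite -(prednK (leq_ltn_trans (leq0n p) pn)) ltnS.
  by apply/bigmax_leqP => t /andP [_ tn]; rewrite -ltnS prednK // (leq_ltn_trans _ tn).
exists (maxn p M); split; first exact: leq_maxl.
- by rewrite gtn_max pn Mn.
- move=> t tD pt tn; apply: leq_trans (leq_maxr p M).
  by apply: (@leq_bigmax_cond _ A (fun t : 'I_n => t.+1)); rewrite /A /= tD pt.
rewrite leq_max ltnn /= => pM; rewrite (maxn_idPr (ltnW pM)).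
have cA : 0 < #|A|.
  rewrite lt0n; apply: contraTneq pM => /card0_eq A0.
  by rewrite /M big_pred0 => [|t]; rewrite ?ltn0 ?ltnn ?A0.
case: (eq_bigmax_cond (fun t : 'I_n => t.+1) cA) => t tA tM.
by exists t; [case/andP: tA => /andP [] | rewrite -tM].
Qed.

Lemma descents_from_sub (D : {set 'I_n}) x q : p <= q -> q < n ->
  (forall t : 'I_n, t \in D -> p <= t -> t.+1 < n -> t.+1 <= q) ->
  (p < q -> exists2 t : 'I_n, t \in D & t.+1 = q) ->
  (descents_from x \subset D) = increasing_from x q &&
    [forall t : 'I_n, (p <= t) && (t.+1 < q) && (letter x t.+1 < letter x t) ==> (t \in D)].
Proof.
move=> pq qn beyond reach; apply/idP/andP => [sub|[inc inD]].
  split; apply/forallP => t; apply/implyP.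
    move=> /andP [qt tn]; rewrite ltn_letterSN //.
    apply/negP => lt; have pt := leq_trans pq qt.
    have /beyond : t \in D by apply: (subsetP sub); rewrite inE pt tn lt.
    by move=> /(_ pt tn); rewrite ltnNge qt.
  by move=> /andP [/andP [pt tq] lt]; apply: (subsetP sub); rewrite inE pt lt (ltn_trans tq).
apply/subsetP => t; rewrite inE => /andP [/andP [pt tn] lt].
case: (ltngtP t.+1 q) => [tq|qt|tq].
- by move/forallP: inD => /(_ t); rewrite pt tq lt.
- move/forallP: inc => /(_ t); rewrite -ltnS qt tn => /(ltn_trans lt).
  by rewrite ltnn.
- by case: reach => [|t' t'D /eqP]; rewrite -?tq // eqSS => /eqP /val_inj <-.
Qed.

Lemma descents_sub_sum_eq0 D : descents_sub_sum D = 0%R.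
Proof.
have [q [pq qn beyond reach]] := descents_cut D.
(* Past the cut, x must increase; before it, the condition only sees st_take x q. *)
pose Q (y : 'S_q) :=
  [forall t : 'I_n, (p <= t) && (t.+1 < q) &&
     (letter y t.+1 < letter y t) ==> (t \in D)] &&
  [forall i : 'I_p, forall j : 'I_p, (letter v i < letter v j) == (letter y i < letter y j)].
have QE x : (descents_from x \subset D) && (st_take x p == v) =
    Q (st_take x q) && increasing_from x q.
  rewrite (descents_from_sub x pq qn beyond reach) (st_take_eqE x v (ltnW pn)) /Q.
  rewrite -andbA andbC -!andbA; congr (_ && _).
    apply: eq_forallb => t; case tq: (t.+1 < q); rewrite ?andbF ?andbT //.
    by rewrite letter_st_take ?(ltnW qn) // (ltn_trans _ tq).
  congr (_ && _); apply: eq_forallb => i; apply: eq_forallb => j.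
  by rewrite letter_st_take ?(ltnW qn) ?(leq_trans (ltn_ord _) pq).
rewrite /descents_sub_sum (eq_bigr (fun x =>
  h x * \sum_(y | Q y) ((st_take x q == y) && increasing_from x q)%:R))%R.
  rewrite -exchange_sum_natr big1 // => y _.
  by rewrite -(idDDelta_nil h _ qn); apply: idDDelta_nil_eq0.
by move=> x _; rewrite QE sum_eq_andb_natr.
Qed.

(* Moebius inversion on the subset lattice, by induction on #|D|. *)
Lemma descents_eq_sum_eq0 D : descents_eq_sum D = 0%R.
Proof.
elim: {D}#|D|.+1 {-2}D (ltnSn #|D|) => // k IH D Dk.
move: (descents_sub_sum_eq0 D); rewrite descents_sub_sumE (bigD1 D) //= big1 ?addr0 //.
move=> D' /andP [sub ne]; apply: IH.
by rewrite -ltnS (leq_trans _ Dk) // ltnS proper_card // properEneq ne sub.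
Qed.

Lemma idDDelta_low_eq0 J : idDDelta h v J = 0%R.
Proof.
have -> : idDDelta h v J = (\sum_(D | Des_of_positions D == J) descents_eq_sum D)%R.
  rewrite exchange_sum_natr /idDDelta; apply: eq_bigr => x _; congr (_ * _)%R.
  by rewrite sum_eq_andb_natr -/(st_take x p) -/(st_drop x p) Des_st_drop_positions andbC.
by rewrite big1 // => D _; apply: descents_eq_sum_eq0.
Qed.

End ZetaToKernel.

Lemma in_left_kernelP n (h : {ffun 'S_n -> rat}) :
  in_left_kernel h <-> forall W, ~~ good W -> weak_zeta h W = 0%R.
Proof.
split; first exact: in_left_kernel_zeta.
move=> zeta0; split => [p v J pn|v J]; first exact: idDDelta_low_eq0.
exact: idDDelta_top.
Qed.

Lemma weak_zeta_Mbasis_comb n (c : 'S_n -> rat) W :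
  weak_zeta (fun v => \sum_(u | good u) c u * Mbasis u v)%R W =
  (if good W then c W else 0)%R.
Proof.
rewrite /weak_zeta exchange_big /=.
under eq_bigr => u _ do rewrite -mulr_sumr -[X in (_ * X)%R]/(weak_zeta (Mbasis u) W).
under eq_bigr => u _ do rewrite weak_zeta_Mbasis.
case: ifP => gW; last first.
  by rewrite big1 // => u gu; case: eqP => [E|_]; [rewrite -E gu in gW | rewrite mulr0].
rewrite (bigD1 W) //= eqxx mulr1 big1 ?addr0 // => u /andP [_ ne].
by rewrite (negbTE ne) mulr0.
Qed.

Unset Implicit Arguments.

Theorem mainTheorem15 (n : nat) (hn : (0 < n)%N) :
  [/\ (* the M_u, u good, lie in A_n *)
      (forall u : 'S_n, good u -> in_left_kernel (Mbasis u)),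
      (* they are linearly independent *)
      (forall c : 'S_n -> rat,
         (forall v : 'S_n, (\sum_(u : 'S_n | good u) c u * Mbasis u v)%R = 0%R) ->
         forall u : 'S_n, good u -> c u = 0%R),
      (* they span A_n *)
      (forall h : {ffun 'S_n -> rat}, in_left_kernel h ->
         exists c : 'S_n -> rat,
           forall v : 'S_n, h v = (\sum_(u : 'S_n | good u) c u * Mbasis u v)%R)
    & (* hence dim A_n = n! - sum_{k<n} k! *)
      #|[set u : 'S_n | good u]| = (n`! - \sum_(k < n) k`!)%N].
Proof.
split.
- move=> u gu; apply/in_left_kernelP => W gW; rewrite weak_zeta_Mbasis.
  by case: eqP => // E; rewrite -E gu in gW.
- move=> c H u gu; have := weak_zeta_Mbasis_comb c u.
  by rewrite gu /weak_zeta big1 // => x _; apply: H.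
- move=> h /in_left_kernelP K; exists (weak_zeta h) => v; apply/eqP; rewrite -subr_eq0.
  apply/eqP; move: v; apply: weak_zeta_eq0 => W.
  rewrite /weak_zeta sumrB -/(weak_zeta h W) -/(weak_zeta _ W) weak_zeta_Mbasis_comb.
  by case: ifP => [_|/negbT/K ->]; rewrite subrr.
- exact: card_good.
Qed.
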